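(* Let $X$ be a connected simplicial complex and $Z\subseteq X$ a connected essential subcomplex. If the homomorphism $\pi_1Z\to\pi_1X$ induced by inclusion is not injective, then $Z$ is contained in a thick subcomplex $Z'\subseteq X$ such that $Z'\setminus Z$ consists of finitely many simplices.
   Context: For a subcomplex $Y$ of dimension at most $2$, the degree of an edge is the number of triangles of $Y$ containing it. $Y$ is essential if every edge has degree at least $2$ in $Y$ and no connected component of $Y$ is a single vertex; an essential $Y$ is thick if some edge has degree at least $3$ in $Y$. *)

(* Abstract simplicial complexes on an arbitrary
   (possibly infinite) vertex type V : eqType; a simplex is a nonempty
   duplicate-free list of vertices, taken up to permutation. *)
From HB Require Import structures.
From mathcomp Require Import all_boot.
From Stdlib Require Import Relations.
Set Implicit Arguments. Unset Strict Implicit. Unset Printing Implicit Defensive.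

Record complex (V : eqType) := Complex {
  simp : seq V -> Prop;
  simp_ne : forall s, simp s -> s <> [::];
  simp_uniq : forall s, simp s -> uniq s;
  simp_perm : forall s t, simp s -> perm_eq s t -> simp t;
  simp_face : forall s t, simp s -> t <> [::] -> uniq t -> {subset t <= s} -> simp t
}.

Section Defs.
Variable V : eqType.
Implicit Types X Y Z : complex V.

Definition subcomplex Y X : Prop := forall s, simp Y s -> simp X s.

Definition spans (K : complex V) (s : seq V) : Prop := simp K (undup s).

Definition is_vertex (K : complex V) (v : V) : Prop := simp K [:: v].
Definition is_edge (K : complex V) (u v : V) : Prop := simp K [:: u; v].

Definition dim_le2 (K : complex V) : Prop := forall s, simp K s -> size s <= 3.

Definition deg_ge (K : complex V) (u v : V) (k : nat) : Prop :=
  exists ws : seq V, [/\ uniq ws, size ws = k & forall w, w \in ws -> simp K [:: u; v; w]].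

Fixpoint epath (K : complex V) (x : V) (p : seq V) : Prop :=
  match p with
  | [::] => is_vertex K x
  | y :: q => spans K [:: x; y] /\ epath K y q
  end.

Definition connected (K : complex V) : Prop :=
  (exists v, is_vertex K v) /\
  forall u v, is_vertex K u -> is_vertex K v ->
    exists p, epath K u p /\ last u p = v.

Definition essential (K : complex V) : Prop :=
  [/\ dim_le2 K,
      (forall u v, is_edge K u v -> deg_ge K u v 2) &
      (* no connected component is a single vertex: every vertex lies on an edge *)
      (forall v, is_vertex K v -> exists w, is_edge K v w)].

Definition thick (K : complex V) : Prop :=
  essential K /\ exists u v, is_edge K u v /\ deg_ge K u v 3.

(* elementary moves of the edge-path group (Spanier): delete a repeated
   vertex, or replace u v w by u w when {u,v,w} spans a simplex *)
Definition emove (K : complex V) (p q : seq V) : Prop :=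
  (exists a b u, p = a ++ u :: u :: b /\ q = a ++ u :: b) \/
  (exists a b u v w, p = a ++ u :: v :: w :: b /\ q = a ++ u :: w :: b /\
                     spans K [:: u; v; w]).

Definition epath_equiv (K : complex V) : relation (seq V) :=
  clos_refl_sym_trans (seq V) (emove K).

Definition eloop (K : complex V) (x : V) (p : seq V) : Prop :=
  epath K x p /\ last x p = x.

(* the homomorphism pi_1(Z,x) -> pi_1(X,x) induced by inclusion (edge-path
   groups) is not injective for some basepoint x of Z *)
Definition pi1_not_injective (Z X : complex V) : Prop :=
  exists x p q, [/\ eloop Z x p, eloop Z x q,
                    epath_equiv X (x :: p) (x :: q) &
                    ~ epath_equiv Z (x :: p) (x :: q)].

Definition finitely_many_new (Y' Y : complex V) : Prop :=
  exists ss : seq (seq V), forall s, simp Y' s -> ~ simp Y s ->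
    exists2 t, t \in ss & perm_eq s t.

End Defs.

(* An equivalence of edge paths in X uses only finitely many triangles, so the two loops of Z
   are already equivalent in the complex Y obtained from Z by adjoining those triangles, and
   Y \ Z is finite.  A free edge ab of Y outside Z, lying in a single triangle abc, can be
   collapsed: rerouting ab through c maps edge paths of Y to edge paths of Y minus the star of
   ab and fixes the paths of Z, so the loops stay equivalent; by induction on Y \ Z we may
   assume there is no such edge.  If some simplex of Y \ Z contains an edge of Z, then Z
   together with all triangles of Y is thick: that edge gains a third triangle, and every new
   edge, not being free, lies in two triangles.  Otherwise no triangle outside Z has an edge in
   Z, and replacing every edge outside Z by a detour through a base point of Z retracts the
   edge-path equivalence of Y onto Z, so the loops would already be equivalent in Z. *)

From mathcomp Require Import all_boot.
From Stdlib Require Import Relations ClassicalEpsilon.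
Set Implicit Arguments. Unset Strict Implicit. Unset Printing Implicit Defensive.

Section SeqFacts.
Variable T : eqType.

Lemma perm_to_rem2 (s : seq T) x y : uniq s -> x \in s -> y \in s -> x != y ->
  perm_eq s [:: x, y & rem y (rem x s)].
Proof.
move=> us xs ys nxy; have y_rem : y \in rem x s by rewrite mem_rem_uniq // inE eq_sym nxy.
apply: perm_trans (perm_to_rem xs) _; rewrite perm_cons; exact: perm_to_rem y_rem.
Qed.

Lemma size_rem2 (s : seq T) x y : uniq s -> x \in s -> y \in s -> x != y ->
  size (rem y (rem x s)) = (size s).-2.
Proof. by move=> us xs ys nxy; rewrite (perm_size (perm_to_rem2 us xs ys nxy)). Qed.

End SeqFacts.

Section EdgePathEquiv.
Variable V : eqType.
Implicit Types (K : complex V) (x y z : V) (l r p q s t : seq V).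

Lemma epath_equiv_refl K p : epath_equiv K p p.
Proof. exact: rst_refl. Qed.

Lemma epath_equiv_sym K p q : epath_equiv K p q -> epath_equiv K q p.
Proof. exact: rst_sym. Qed.

Lemma epath_equiv_trans K p q r :
  epath_equiv K p q -> epath_equiv K q r -> epath_equiv K p r.
Proof. exact: rst_trans. Qed.

Lemma epath_equiv_ctx K l r p q :
  epath_equiv K p q -> epath_equiv K (l ++ p ++ r) (l ++ q ++ r).
Proof.
elim=> {p q} [p q [[a [b [u [-> ->]]]] | [a [b [u [v [w [-> [-> uvw]]]]]]]]
             | p | p q _ | p q s _ pq _ qs].
- by apply: rst_step; left; exists (l ++ a), (b ++ r), u; rewrite -!catA.
- by apply: rst_step; right; exists (l ++ a), (b ++ r), u, v, w; rewrite -!catA.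
- exact: epath_equiv_refl.
- exact: epath_equiv_sym.
- exact: epath_equiv_trans pq qs.
Qed.

Lemma dup_equiv K l x r : epath_equiv K (l ++ x :: x :: r) (l ++ x :: r).
Proof. by apply: rst_step; left; exists l, r, x. Qed.

Lemma triangle_equiv K l u v w r : spans K [:: u; v; w] ->
  epath_equiv K (l ++ u :: v :: w :: r) (l ++ u :: w :: r).
Proof. by move=> uvw; apply: rst_step; right; exists l, r, u, v, w. Qed.

Lemma spans_face K s t : spans K s -> t <> [::] -> {subset t <= s} -> spans K t.
Proof.
move=> Ks t0 ts; apply: (simp_face Ks); rewrite ?undup_uniq //.
- by move/undup_nil.
- by move=> z; rewrite !mem_undup; apply: ts.
Qed.

Lemma spansC K x y : spans K [:: x; y] -> spans K [:: y; x].
Proof. by move/spans_face; apply=> // z; rewrite !inE orbC. Qed.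

Lemma spans_edge K x y : x != y -> spans K [:: x; y] -> is_edge K x y.
Proof. by move=> xy; rewrite /spans undup_id //= inE andbT. Qed.

Lemma spans_vertex K s x : spans K s -> x \in s -> is_vertex K x.
Proof. by move/spans_face=> /(_ [:: x]) Ks xs; apply: Ks => // z; rewrite inE => /eqP->. Qed.

Lemma backtrack_equiv K l x y r : spans K [:: x; y] ->
  epath_equiv K (l ++ x :: y :: x :: r) (l ++ x :: r).
Proof.
move=> xy; apply: epath_equiv_trans (dup_equiv K l x r); apply: triangle_equiv.
by apply: (spans_face xy) => // z; rewrite !inE => /or3P[] ->; rewrite ?orbT.
Qed.

Lemma epath_rcons K x p y :
  epath K x (rcons p y) <-> epath K x p /\ spans K [:: last x p; y].
Proof.
elim: p x => [|z p IHp] x /=.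
  by split=> [[xy _] | [_ xy]]; split=> //; apply: (spans_vertex xy); rewrite !inE eqxx ?orbT.
by rewrite IHp; split=> [[xz [zp pl]] | [[xz zp] pl]].
Qed.

Lemma epath_rev K x p : epath K x p -> epath K (last x p) (rev (belast x p)).
Proof.
elim: p x => [|y p IHp] x //= [xy yp].
rewrite rev_cons epath_rcons; split; first exact: IHp.
suff -> : last (last y p) (rev (belast y p)) = y by exact: spansC.
by case: p {IHp yp} => //= z p; rewrite rev_cons last_rcons.
Qed.

Lemma cat_rev_equiv K x p : epath K x p ->
  epath_equiv K ((x :: p) ++ rev (x :: p)) [:: x].
Proof.
elim: p x => [|y p IHp] x /=; first by move=> _; apply: (dup_equiv K [::]).
case=> xy /IHp /(epath_equiv_ctx [:: x] [:: x]) /= yp.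
apply: epath_equiv_trans (backtrack_equiv [::] [::] xy).
by rewrite rev_cons -cats1 catA.
Qed.

Lemma rev_cat_equiv K x p : epath K x p ->
  epath_equiv K (rev (x :: p) ++ x :: p) [:: last x p].
Proof.
move/epath_rev/cat_rev_equiv.
by rewrite -rev_rcons -lastI revK.
Qed.

Definition cone_rel c : rel V := fun y z => [|| y == z, y == c | z == c].

Lemma cone_equiv K (N : seq V) c x t :
  {in N, forall y, spans K [:: y; c]} -> {subset x :: t <= N} ->
  path (cone_rel c) x t ->
  epath_equiv K (x :: t) [:: x; c; last x t].
Proof.
move=> Nc; elim: t x => [|y t IHt] x xtN /=.
  by move=> _; apply/epath_equiv_sym/(backtrack_equiv [::] [::])/Nc/xtN/mem_head.
case/andP=> xy yt.
have {}yt : epath_equiv K (y :: t) [:: y; c; last y t].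
  by apply: IHt yt => z zt; apply: xtN; rewrite inE zt orbT.
move/(epath_equiv_ctx [:: x] [::]): yt; rewrite /= !cats0 => xyt.
apply: epath_equiv_trans xyt _.
case/or3P: xy => /eqP eq_xy; subst.
- exact: (dup_equiv K [::]).
- have cy : spans K [:: c; y] by apply/spansC/Nc/xtN; rewrite !inE eqxx orbT.
  apply: epath_equiv_trans (backtrack_equiv [::] [:: last y t] cy) _.
  exact: epath_equiv_sym (dup_equiv K [::] c [:: last y t]).
- exact: (dup_equiv K [:: x]).
Qed.

Lemma cone_equiv_eq K (N : seq V) c x s t :
  {in N, forall y, spans K [:: y; c]} -> {subset x :: s <= N} -> {subset x :: t <= N} ->
  path (cone_rel c) x s ->
  path (cone_rel c) x t ->
  last x s = last x t -> epath_equiv K (x :: s) (x :: t).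
Proof.
move=> Nc sN tN s_cone t_cone st.
apply: epath_equiv_trans (cone_equiv Nc sN s_cone) _; rewrite st.
exact/epath_equiv_sym/(cone_equiv Nc tN t_cone).
Qed.

End EdgePathEquiv.

Section ComplexOf.
Variables (V : eqType) (P : seq V -> Prop).
Hypotheses (P_ne : forall s, P s -> s <> [::]) (P_uniq : forall s, P s -> uniq s)
  (P_face : forall s t, P s -> t <> [::] -> uniq t -> {subset t <= s} -> P t).

Lemma face_closed_perm s t : P s -> perm_eq s t -> P t.
Proof.
move=> Ps st; apply: (P_face Ps); last by move=> z; rewrite (perm_mem st).
- by move=> t0; move: st (P_ne Ps); rewrite t0 => /perm_nilP.
- by rewrite -(perm_uniq st); apply: P_uniq.
Qed.

Definition complex_of : complex V := Complex P_ne P_uniq face_closed_perm P_face.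

End ComplexOf.

Section Adjoin.
Variables (V : eqType) (Z : complex V) (T : seq V -> Prop).

Definition adjoin_simp (s : seq V) : Prop :=
  simp Z s \/ [/\ s <> [::], uniq s & exists2 f, T f & {subset s <= f}].

Lemma adjoin_ne s : adjoin_simp s -> s <> [::].
Proof. by case=> [/simp_ne | []]. Qed.

Lemma adjoin_uniq s : adjoin_simp s -> uniq s.
Proof. by case=> [/simp_uniq | []]. Qed.

Lemma adjoin_face s t :
  adjoin_simp s -> t <> [::] -> uniq t -> {subset t <= s} -> adjoin_simp t.
Proof.
move=> [Zs | [_ _ [f Tf sf]]] t0 ut ts; first by left; apply: simp_face Zs t0 ut ts.
by right; split=> //; exists f => // z /ts /sf.
Qed.

Definition adjoin : complex V := complex_of adjoin_ne adjoin_uniq adjoin_face.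

Lemma sub_adjoin : subcomplex Z adjoin.
Proof. by move=> s Zs; left. Qed.

End Adjoin.

Section DeleteEdge.
Variables (V : eqType) (Y : complex V) (a b : V).

Definition del_edge_simp (s : seq V) : Prop := simp Y s /\ ~ (a \in s /\ b \in s).

Lemma del_edge_ne s : del_edge_simp s -> s <> [::].
Proof. by case=> /simp_ne. Qed.

Lemma del_edge_uniq s : del_edge_simp s -> uniq s.
Proof. by case=> /simp_uniq. Qed.

Lemma del_edge_face s t :
  del_edge_simp s -> t <> [::] -> uniq t -> {subset t <= s} -> del_edge_simp t.
Proof.
move=> [Ys ab_s] t0 ut ts; split; first exact: simp_face Ys t0 ut ts.
by case=> /ts a_s /ts b_s; apply: ab_s.
Qed.

Definition del_edge : complex V := complex_of del_edge_ne del_edge_uniq del_edge_face.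

Lemma del_edge_sub : subcomplex del_edge Y.
Proof. by move=> s []. Qed.

Lemma sub_del_edge (Z : complex V) : a != b -> ~ simp Z [:: a; b] ->
  subcomplex Z Y -> subcomplex Z del_edge.
Proof.
move=> ab nZab sZY s Zs; split; first exact: sZY.
case=> a_s b_s; apply/nZab/(simp_face Zs) => //; first by rewrite /= inE ab.
by move=> z; rewrite !inE => /orP[]/eqP->.
Qed.

End DeleteEdge.

Section EdgePathMap.
Variables (V : eqType) (K K' : complex V) (iota : V -> V) (g : V -> V -> seq V).

(* The image of [x_0; ...; x_n] is iota x_0, g x_0 x_1, iota x_1, ..., iota x_n: the list
   [g x y] is the interior of the path that replaces the edge xy. *)
Definition emap (s : seq V) : seq V :=
  if s is x :: t then iota x :: flatten (pairmap (fun y z => g y z ++ [:: iota z]) x t)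
  else [::].

Lemma emap_cat a u : exists l, forall t, emap (a ++ u :: t) = l ++ emap (u :: t).
Proof.
case: a => [|x a]; first by exists [::].
exists (iota x :: flatten (pairmap (fun y z => g y z ++ [:: iota z]) x a) ++ g (last x a) u).
by move=> t; rewrite /= pairmap_cat flatten_cat /= -!catA.
Qed.

Lemma emap_id (Z : complex V) x p :
  (forall y, is_vertex Z y -> iota y = y) -> (forall y z, spans Z [:: y; z] -> g y z = [::]) ->
  epath Z x p -> emap (x :: p) = x :: p.
Proof.
move=> iota_id g_nil; elim: p x => [|y p IHp] x /=; first by move/iota_id->.
case=> xy /IHp /= yp; rewrite g_nil // iota_id; last exact: spans_vertex xy (mem_head _ _).
by rewrite /= yp.
Qed.

Hypothesis emap_degenerate :
  forall u, epath_equiv K' (iota u :: g u u ++ [:: iota u]) [:: iota u].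
Hypothesis emap_triangle : forall u v w, u != v -> v != w -> spans K [:: u; v; w] ->
  epath_equiv K' (iota u :: g u v ++ iota v :: g v w ++ [:: iota w])
                 (iota u :: g u w ++ [:: iota w]).

Let degenerate_ctx l u r :
  epath_equiv K' (l ++ iota u :: g u u ++ iota u :: r) (l ++ iota u :: r).
Proof. by have := epath_equiv_ctx l r (emap_degenerate u); rewrite /= -catA. Qed.

Let triangle_ctx l u v w r : spans K [:: u; v; w] ->
  epath_equiv K' (l ++ iota u :: g u v ++ iota v :: g v w ++ iota w :: r)
                 (l ++ iota u :: g u w ++ iota w :: r).
Proof.
move=> uvw; have [<- | uv] := eqVneq u v; first exact: degenerate_ctx.
have [<- | vw] := eqVneq v w.
  by have := degenerate_ctx (l ++ iota u :: g u v) v r; rewrite -!catA.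
by have := epath_equiv_ctx l r (emap_triangle uv vw uvw); rewrite /= -!catA /= -catA.
Qed.

Lemma emap_equiv p q : epath_equiv K p q -> epath_equiv K' (emap p) (emap q).
Proof.
elim=> {p q} [p q [[a [b [u [-> ->]]]] | [a [b [u [v [w [-> [-> uvw]]]]]]]]
             | p | p q _ | p q s _ pq _ qs].
- have [l El] := emap_cat a u; rewrite !El /= -catA.
  exact: degenerate_ctx.
- have [l El] := emap_cat a u; rewrite !El /= -!catA /=.
  exact: triangle_ctx.
- exact: epath_equiv_refl.
- exact: epath_equiv_sym.
- exact: epath_equiv_trans pq qs.
Qed.

Lemma emap_retract (Z : complex V) x p q :
  (forall y, is_vertex Z y -> iota y = y) -> (forall y z, spans Z [:: y; z] -> g y z = [::]) ->
  epath Z x p -> epath Z x q -> epath_equiv K (x :: p) (x :: q) -> epath_equiv K' (x :: p) (x :: q).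
Proof.
move=> iota_id g_nil Zp Zq /emap_equiv.
by rewrite !(emap_id iota_id g_nil).
Qed.

End EdgePathMap.

Definition free_edge (V : eqType) (Z Y : complex V) (a b c : V) : Prop :=
  [/\ simp Y [:: a; b; c], ~ simp Z [:: a; b] &
      forall s, simp Y s -> a \in s -> b \in s -> {subset s <= [:: a; b; c]}].

Section Collapse.
Variables (V : eqType) (Z Y : complex V) (a b c : V).
Hypotheses (Yabc : simp Y [:: a; b; c]) (nZab : ~ simp Z [:: a; b])
  (abc_star : forall s, simp Y s -> a \in s -> b \in s -> {subset s <= [:: a; b; c]}).

Let Y' := del_edge Y a b.

Let abF : (a == b) = false. Proof. by move: (simp_uniq Yabc); rewrite /= !inE; case: eqP. Qed.
Let baF : (b == a) = false. Proof. by rewrite eq_sym abF. Qed.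
Let acF : (a == c) = false.
Proof. by move: (simp_uniq Yabc); rewrite /= !inE; case: (a == c); rewrite ?orbT. Qed.
Let caF : (c == a) = false. Proof. by rewrite eq_sym acF. Qed.
Let bcF : (b == c) = false.
Proof. by move: (simp_uniq Yabc); rewrite /= !inE; case: (b == c); rewrite ?andbF. Qed.
Let cbF : (c == b) = false. Proof. by rewrite eq_sym bcF. Qed.

Let spans_to_c x : x \in [:: a; b; c] -> spans Y' [:: x; c].
Proof.
move=> x_abc; have xc_abc : {subset undup [:: x; c] <= [:: a; b; c]}.
  move=> z; rewrite mem_undup => /predU1P[-> // | ].
  by rewrite orbF => /eqP->; apply: (mem_last a [:: b; c]).
split; first by apply: (simp_face Yabc); rewrite ?undup_uniq // => /undup_nil.
rewrite !mem_undup; move: x_abc; rewrite !inE => /or3P[]/eqP->;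
  by rewrite ?abF ?baF ?acF ?caF ?bcF ?cbF ?eqxx; case.
Qed.

Definition collapse_path (x y : V) : seq V :=
  if (a \in [:: x; y]) && (b \in [:: x; y]) then [:: c] else [::].

Let collapse_path_nil (s : seq V) x y : x \in s -> y \in s -> ~~ ((a \in s) && (b \in s)) ->
  collapse_path x y = [::].
Proof.
rewrite /collapse_path => xs ys; apply: contraNeq; case: ifP => // /andP[].
by rewrite !inE => /orP[]/eqP-> /orP[]/eqP->; rewrite ?xs ?ys.
Qed.

Let collapse_degenerate u : epath_equiv Y' (u :: collapse_path u u ++ [:: u]) [:: u].
Proof.
rewrite (@collapse_path_nil [:: u]) ?mem_head //; first exact: (dup_equiv _ [::]).
by rewrite !inE; apply/negP => /andP[/eqP au /eqP bu]; move: abF; rewrite au bu eqxx.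
Qed.

Let collapse_triangle u v w : u != v -> v != w -> spans Y [:: u; v; w] ->
  epath_equiv Y' (u :: collapse_path u v ++ v :: collapse_path v w ++ [:: w])
                 (u :: collapse_path u w ++ [:: w]).
Proof.
move=> uv vw Yuvw; set s := [:: u; v; w].
have us : u \in s by rewrite mem_head.
have vs : v \in s by rewrite !inE eqxx orbT.
have ws : w \in s by rewrite !inE eqxx !orbT.
have [ab_s | ab_s] := boolP ((a \in s) && (b \in s)); last first.
  rewrite !(collapse_path_nil _ _ ab_s) //=.
  apply: (triangle_equiv [::] [::]); split=> //.
  by rewrite !mem_undup => -[a_s b_s]; rewrite a_s b_s in ab_s.
have s_abc : {subset s <= [:: a; b; c]}.
  by case/andP: ab_s => a_s b_s z zs; apply: (abc_star Yuvw); rewrite mem_undup.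
move: (s_abc _ us) (s_abc _ vs) (s_abc _ ws) ab_s uv vw; rewrite /s /collapse_path !inE.
move=> /or3P[]/eqP-> /or3P[]/eqP-> /or3P[]/eqP->;
  rewrite ?abF ?baF ?acF ?caF ?bcF ?cbF ?eqxx //= => _ _ _.
all: apply: (cone_equiv_eq spans_to_c);
  rewrite /= /cone_rel ?abF ?baF ?acF ?caF ?bcF ?cbF ?eqxx ?orbT //.
all: by apply/allP; rewrite /= !inE !eqxx ?orbT.
Qed.

Lemma collapse_equiv x p q : epath Z x p -> epath Z x q ->
  epath_equiv Y (x :: p) (x :: q) -> epath_equiv (del_edge Y a b) (x :: p) (x :: q).
Proof.
apply: (@emap_retract _ Y Y' id collapse_path collapse_degenerate collapse_triangle Z) => //.
move=> y z Zyz.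
rewrite /collapse_path; case: ifP => // /andP[a_yz b_yz]; case: nZab.
have: spans Z [:: a; b] by apply: (spans_face Zyz) => // t /predU1P[-> // | /predU1P[-> // | //]].
by rewrite /spans /= inE abF.
Qed.

End Collapse.

Section Retract.
Variables (V : eqType) (Z Y : complex V) (z0 : V) (rho : V -> seq V).
Hypotheses (rho_walk : forall v, epath Z z0 (rho v))
  (rho_last : forall v, is_vertex Z v -> last z0 (rho v) = v)
  (Z_edge_closed : forall s x y, simp Y s -> x \in s -> y \in s -> is_edge Z x y -> simp Z s).

Let io v := last z0 (rho v).
Let spine v := belast z0 (rho v).

Let walkE v : z0 :: rho v = spine v ++ [:: io v].
Proof. by rewrite cats1 -lastI. Qed.

Let rev_walkE v : rev (z0 :: rho v) = io v :: rev (spine v).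
Proof. by rewrite walkE cats1 rev_rcons. Qed.

(* An edge xy outside Z becomes the walk from io x back to z0 followed by the walk out to io y. *)
Definition wedge_path x y : seq V :=
  if excluded_middle_informative (spans Z [:: x; y]) then [::] else rev (spine x) ++ spine y.

Let wedge_path_Z x y : spans Z [:: x; y] -> wedge_path x y = [::].
Proof. by rewrite /wedge_path; case: excluded_middle_informative. Qed.

Let wedge_path_off x y : ~ spans Z [:: x; y] -> wedge_path x y = rev (spine x) ++ spine y.
Proof. by rewrite /wedge_path; case: excluded_middle_informative. Qed.

Let zigzag_equiv u : epath_equiv Z (io u :: rev (spine u) ++ spine u ++ [:: io u]) [:: io u].
Proof. by have := rev_cat_equiv (rho_walk u); rewrite rev_walkE walkE. Qed.

Let spine_loop_equiv v : epath_equiv Z (spine v ++ io v :: rev (spine v)) [:: z0].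
Proof.
apply: epath_equiv_trans (epath_equiv_sym (dup_equiv Z (spine v) (io v) (rev (spine v)))) _.
by have := cat_rev_equiv (rho_walk v); rewrite rev_walkE walkE -catA.
Qed.

Let zigzag_cancel u v w :
  epath_equiv Z (io u :: rev (spine u) ++ spine v ++ io v :: rev (spine v) ++ spine w ++ [:: io w])
                (io u :: rev (spine u) ++ spine w ++ [:: io w]).
Proof.
have := epath_equiv_ctx (io u :: rev (spine u)) (spine w ++ [:: io w]) (spine_loop_equiv v).
rewrite /= -!catA /= => /epath_equiv_trans; apply.
by rewrite -walkE; apply: (dup_equiv Z (io u :: rev (spine u))).
Qed.

Let wedge_degenerate u : epath_equiv Z (io u :: wedge_path u u ++ [:: io u]) [:: io u].
Proof.
have [Zuu | nZuu] := classic (spans Z [:: u; u]).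
  by rewrite wedge_path_Z //; apply: (dup_equiv Z [::]).
by rewrite wedge_path_off // -catA; apply: zigzag_equiv.
Qed.

Let wedge_triangle u v w : u != v -> v != w -> spans Y [:: u; v; w] ->
  epath_equiv Z (io u :: wedge_path u v ++ io v :: wedge_path v w ++ [:: io w])
                (io u :: wedge_path u w ++ [:: io w]).
Proof.
move=> uv vw Yuvw; set s := [:: u; v; w].
have us : u \in s by rewrite mem_head.
have vs : v \in s by rewrite !inE eqxx orbT.
have ws : w \in s by rewrite !inE eqxx !orbT.
have [Zs | nZs] := classic (spans Z s).
  have Z_edge x y : x \in s -> y \in s -> spans Z [:: x; y].
    by move=> xs ys; apply: (spans_face Zs) => // t /predU1P[-> // | /predU1P[-> // | //]].
  have io_id x : x \in s -> io x = x by move=> xs; apply/rho_last/(spans_vertex Zs).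
  rewrite (wedge_path_Z (Z_edge _ _ us vs)) (wedge_path_Z (Z_edge _ _ vs ws)).
  rewrite (wedge_path_Z (Z_edge _ _ us ws)) !io_id //=.
  exact: (triangle_equiv [::] [::] Zs).
have not_Z_edge x y : x \in s -> y \in s -> x != y -> ~ spans Z [:: x; y].
  move=> xs ys xy /(spans_edge xy) Zxy; apply/nZs/(Z_edge_closed Yuvw _ _ Zxy).
    by rewrite mem_undup.
  by rewrite mem_undup.
rewrite (wedge_path_off (not_Z_edge _ _ us vs uv)) (wedge_path_off (not_Z_edge _ _ vs ws vw)).
rewrite -!catA.
apply: epath_equiv_trans (zigzag_cancel u v w) _.
have [<- | uw] := eqVneq u w.
  exact: epath_equiv_trans (zigzag_equiv u) (epath_equiv_sym (wedge_degenerate u)).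
by rewrite (wedge_path_off (not_Z_edge _ _ us ws uw)) -catA; apply: epath_equiv_refl.
Qed.

Lemma retract_equiv x p q : epath Z x p -> epath Z x q ->
  epath_equiv Y (x :: p) (x :: q) -> epath_equiv Z (x :: p) (x :: q).
Proof. exact: (emap_retract wedge_degenerate wedge_triangle rho_last wedge_path_Z). Qed.

End Retract.

Lemma deg_ge_sub (V : eqType) (K K' : complex V) x y k :
  subcomplex K K' -> deg_ge K x y k -> deg_ge K' x y k.
Proof. by move=> sKK' [ws [uws ws_k Kws]]; exists ws; split=> // w /Kws /sKK'. Qed.

Section Core.
Variables (V : eqType) (Z Y : complex V).

Definition core : complex V := adjoin Z (fun f => simp Y f /\ size f = 3).

Lemma core_sub : subcomplex Z Y -> subcomplex core Y.
Proof.
move=> sZY s [/sZY // | [s0 us [f [Yf _] sf]]].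
exact: simp_face Yf s0 us sf.
Qed.

Lemma triangle_in_core x y w : simp Y [:: x; y; w] -> simp core [:: x; y; w].
Proof. by move=> Yxyw; right; split; rewrite ?(simp_uniq Yxyw) //; exists [:: x; y; w]. Qed.

Hypotheses (sZY : subcomplex Z Y) (dimY : dim_le2 Y) (essZ : essential Z)
  (no_free_edge : forall a b c, ~ free_edge Z Y a b c).

Lemma core_deg2 x y : is_edge core x y -> deg_ge core x y 2.
Proof.
move=> Cxy; have [Zxy | nZxy] := classic (simp Z [:: x; y]).
  by have [_ Z_deg _] := essZ; apply: deg_ge_sub (sub_adjoin _) (Z_deg _ _ Zxy).
case: Cxy => [// | [_ uxy [f [Yf f3] xyf]]].
have xy : x != y by move: uxy; rewrite /= inE andbT.
have xf : x \in f by apply: xyf; rewrite mem_head.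
have yf : y \in f by apply: xyf; rewrite !inE eqxx orbT.
have [c Yxyc] : exists c, simp Y [:: x; y; c].
  have := size_rem2 (simp_uniq Yf) xf yf xy; move: (perm_to_rem2 (simp_uniq Yf) xf yf xy).
  by rewrite f3; case: (rem y (rem x f)) => [|c []] // fxyc _; exists c; apply: simp_perm Yf fxyc.
have [s [Ys xs ys nsub]] :
    exists s, [/\ simp Y s, x \in s, y \in s & ~ {subset s <= [:: x; y; c]}].
  apply: NNPP => nos; apply: (no_free_edge (a := x) (b := y) (c := c)); split=> // s Ys xs ys.
  by apply: NNPP => nsub; apply: nos; exists s.
have /hasP[d ds] : has (predC (mem [:: x; y; c])) s.
  by rewrite has_predC; apply/negP => /allP.
rewrite /= !inE !negb_or => /and3P[dx dy dc].
have Yxyd : simp Y [:: x; y; d].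
  apply: (simp_face Ys) => //; first by rewrite /= !inE negb_or xy !(eq_sym _ d) dx dy.
  by move=> z; rewrite !inE => /or3P[]/eqP->.
exists [:: c; d]; split=> //; first by rewrite /= inE eq_sym dc.
by move=> w; rewrite !inE => /orP[]/eqP->; apply: triangle_in_core.
Qed.

Lemma core_vertex x : is_vertex core x -> exists y, is_edge core x y.
Proof.
have [_ _ Z_vertex] := essZ.
case=> [/Z_vertex [y Zxy] | [_ _ [f [Yf f3] xf]]]; first by exists y; apply: sub_adjoin.
have {}xf : x \in f by apply: xf; rewrite mem_head.
have : size (rem x f) = 2 by rewrite size_rem // f3.
case E: (rem x f) => [|y r] // _.
have : y \in rem x f by rewrite E mem_head.
rewrite mem_rem_uniq ?(simp_uniq Yf) // inE => /andP[yx yf].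
exists y; right; split=> //; first by rewrite /= inE eq_sym yx.
by exists f => // z; rewrite !inE => /orP[]/eqP->.
Qed.

Lemma core_essential : essential core.
Proof.
split; [by move=> s /(core_sub sZY) /dimY | exact: core_deg2 | exact: core_vertex].
Qed.

Lemma core_thick s x y : simp Y s -> ~ simp Z s -> x \in s -> y \in s -> is_edge Z x y ->
  thick core.
Proof.
move=> Ys nZs xs ys Zxy; split; first exact: core_essential.
have xy : x != y by move: (simp_uniq Zxy); rewrite /= inE andbT.
exists x, y; split; first exact: sub_adjoin.
have us := simp_uniq Ys; have sxyr := perm_to_rem2 us xs ys xy.
have : size (rem y (rem x s)) <= 1 by rewrite size_rem2 // -subn2 leq_subLR; apply: dimY.
case: (rem y (rem x s)) sxyr => [|w []] // sxyw _.
  by case: nZs; apply: simp_perm Zxy _; rewrite perm_sym.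
have nZxyw : ~ simp Z [:: x; y; w] by move=> Zxyw; apply/nZs/(simp_perm Zxyw); rewrite perm_sym.
case: essZ => _ /(_ _ _ Zxy) [ws [uws ws2 Zws]] _.
exists (w :: ws); split; first by rewrite /= uws andbT; apply/negP => /Zws.
  by rewrite /= ws2.
move=> z; rewrite inE => /predU1P[-> | /Zws]; last exact: sub_adjoin.
exact/triangle_in_core/(simp_perm Ys).
Qed.

End Core.

Section FiniteSupport.
Variable V : eqType.
Implicit Types (K : complex V) (p q : seq V).

Lemma equiv_finite_support K p q : epath_equiv K p q ->
  exists F : seq (seq V), (forall f, f \in F -> simp K f /\ size f <= 3) /\
    forall K', (forall f, f \in F -> simp K' f) -> epath_equiv K' p q.
Proof.
elim=> {p q} [p q [dup | [a [b [u [v [w [-> [-> uvw]]]]]]]] | p | p q _ [F [FK FK']]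
             | p q r _ [F1 [F1K F1K']] _ [F2 [F2K F2K']]].
- by exists [::]; split=> // K' _; apply: rst_step; left.
- exists [:: undup [:: u; v; w]]; split=> [f | K' F_K'].
    by rewrite inE => /eqP->; split=> //; apply: leq_trans (size_undup _) _.
  by apply: triangle_equiv; apply: F_K'; rewrite mem_head.
- by exists [::]; split=> // K' _; apply: epath_equiv_refl.
- by exists F; split=> // K' /FK'; apply: epath_equiv_sym.
- exists (F1 ++ F2); split=> [f | K' F_K'].
    by rewrite mem_cat => /orP[/F1K | /F2K].
  apply: epath_equiv_trans (F1K' _ _) (F2K' _ _) => f f_F; apply: F_K';
    by rewrite mem_cat f_F ?orbT.
Qed.

Definition subseqs (f : seq V) : seq (seq V) := [seq mask m f | m : (size f).-tuple bool].

Lemma perm_subseqs (f s : seq V) : uniq f -> uniq s -> {subset s <= f} ->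
  exists2 t, t \in subseqs f & perm_eq s t.
Proof.
move=> uf us sf; exists [seq z <- f | z \in s].
  by rewrite filter_mask; apply/imageP; exists (map_tuple (mem s) (in_tuple f)).
apply: uniq_perm; rewrite ?filter_uniq // => z; rewrite mem_filter.
by case zs: (z \in s); rewrite // sf.
Qed.

End FiniteSupport.

Definition equiv_reflected (V : eqType) (Z Y : complex V) : Prop :=
  forall x p q, epath Z x p -> epath Z x q ->
    epath_equiv Y (x :: p) (x :: q) -> epath_equiv Z (x :: p) (x :: q).

Lemma connected_walks (V : eqType) (Z : complex V) : connected Z ->
  exists z0 (rho : V -> seq V),
    (forall v, epath Z z0 (rho v)) /\ (forall v, is_vertex Z v -> last z0 (rho v) = v).
Proof.
case=> [[z0 Zz0] walk]; exists z0.
have [rho rhoP] : exists rho : V -> seq V,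
    forall v, epath Z z0 (rho v) /\ (is_vertex Z v -> last z0 (rho v) = v).
  apply: (choice (fun v p => epath Z z0 p /\ (is_vertex Z v -> last z0 p = v))) => v.
  have [Zv | nZv] := classic (is_vertex Z v).
    by have [p [Zp pv]] := walk _ _ Zz0 Zv; exists p.
  by exists [::].
by exists rho; split=> v; case: (rhoP v).
Qed.

Lemma retract_reflected (V : eqType) (Z Y : complex V) : connected Z ->
  (forall s x y, simp Y s -> x \in s -> y \in s -> is_edge Z x y -> simp Z s) ->
  equiv_reflected Z Y.
Proof.
move=> /connected_walks [z0 [rho [rho_walk rho_last]]] Z_edge_closed x p q.
exact: (retract_equiv rho_walk rho_last Z_edge_closed (x := x)).
Qed.

Lemma collapse_reflected (V : eqType) (Z Y : complex V) a b c : free_edge Z Y a b c ->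
  equiv_reflected Z (del_edge Y a b) -> equiv_reflected Z Y.
Proof.
case=> Yabc nZab abc_star refl x p q Zp Zq.
by move/(collapse_equiv Yabc nZab abc_star Zp Zq); apply: refl.
Qed.

Lemma free_edge_neq (V : eqType) (Z Y : complex V) a b c : free_edge Z Y a b c -> a != b.
Proof. by case=> /simp_uniq; rewrite /= !inE negb_or -andbA => /andP[]. Qed.

Definition covers (V : eqType) (Z Y : complex V) (ss : seq (seq V)) : Prop :=
  forall s, simp Y s -> ~ simp Z s -> exists2 t, t \in ss & perm_eq s t.

Lemma covers_del_edge (V : eqType) (Z Y : complex V) ss a b c :
  free_edge Z Y a b c -> covers Z Y ss ->
  exists2 ss', size ss' < size ss & covers Z (del_edge Y a b) ss'.
Proof.
move=> abc_free cover; case: (abc_free) => Yabc nZab _.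
have nZabc : ~ simp Z [:: a; b; c].
  move=> Zabc; apply/nZab/(simp_face Zabc) => //; first by rewrite /= inE (free_edge_neq abc_free).
  by move=> z; rewrite !inE => /orP[]->; rewrite ?orbT.
have [t t_ss abc_t] := cover _ Yabc nZabc.
exists [seq t <- ss | ~~ perm_eq t [:: a; b; c]].
  rewrite size_filter -(count_predC [pred t | ~~ perm_eq t [:: a; b; c]] ss) -{1}[count _ _]addn0.
  by rewrite ltn_add2l -has_count; apply/hasP; exists t; rewrite //= negbK perm_sym.
move=> s [Ys ab_s] nZs; have [t' t'_ss st'] := cover s Ys nZs.
exists t' => //; rewrite mem_filter t'_ss andbT; apply/negP => t'_abc; apply: ab_s.
by rewrite !(perm_mem (perm_trans st' t'_abc)) !inE !eqxx ?orbT.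
Qed.

Section Main.
Variables (V : eqType) (X Z : complex V).
Hypotheses (conZ : connected Z) (essZ : essential Z).

Lemma thick_of_not_reflected (ss : seq (seq V)) (Y : complex V) :
  subcomplex Y X -> subcomplex Z Y -> dim_le2 Y ->
  covers Z Y ss -> ~ equiv_reflected Z Y ->
  exists Z', [/\ subcomplex Z' X, subcomplex Z Z', thick Z' & finitely_many_new Z' Z].
Proof.
have [n] := ubnP (size ss); elim: n ss Y => // n IHn ss Y ss_n sYX sZY dimY cover nrefl.
have [[a [b [c abc_free]]] | no_free] := classic (exists a b c, free_edge Z Y a b c).
  have [ss' ss'_lt cover'] := covers_del_edge abc_free cover.
  have [_ nZab _] := abc_free.
  apply: (IHn ss' (del_edge Y a b) (leq_trans ss'_lt ss_n) _ _ _ cover').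
  - by move=> s /del_edge_sub /sYX.
  - exact: sub_del_edge (free_edge_neq abc_free) nZab sZY.
  - by move=> s /del_edge_sub /dimY.
  - by move/(collapse_reflected abc_free).
have [[s [x [y [Ys nZs xs ys Zxy]]]] | no_hinge] := classic (exists s x y,
    [/\ simp Y s, ~ simp Z s, x \in s, y \in s & is_edge Z x y]).
  exists (core Z Y); split.
  - by move=> t /(core_sub sZY) /sYX.
  - exact: sub_adjoin.
  - by apply: core_thick Ys nZs xs ys Zxy => // a b c abc_free; apply: no_free; exists a, b, c.
  - by exists ss => t /(core_sub sZY); apply: cover.
case: nrefl; apply: retract_reflected => // t u v Yt ut vt Zuv.
by apply: NNPP => nZt; apply: no_hinge; exists t, u, v.
Qed.

End Main.

Unset Implicit Arguments.

Theorem lemma3p3 (V : eqType) (X Z : complex V) :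
  connected X -> subcomplex Z X -> connected Z -> essential Z ->
  pi1_not_injective Z X ->
  exists Z' : complex V,
    [/\ subcomplex Z' X, subcomplex Z Z', thick Z' & finitely_many_new Z' Z].
Proof.
move=> _ sZX conZ essZ [x [p [q [[Zp _] [Zq _] Xpq nZpq]]]].
have [dimZ _ _] := essZ.
have [F [F_X F_equiv]] := equiv_finite_support Xpq.
pose Y := adjoin Z (fun f => f \in F).
apply: (thick_of_not_reflected conZ essZ (ss := flatten [seq subseqs f | f <- F]) (Y := Y)).
- move=> s [/sZX // | [s0 us [f /F_X [Xf _] sf]]].
  exact: simp_face Xf s0 us sf.
- exact: sub_adjoin.
- move=> s [/dimZ // | [_ us [f /F_X [_ f3] sf]]].
  exact: leq_trans (uniq_leq_size us sf) f3.
- move=> s [// | [_ us [f fF sf]]] _.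
  have [t t_f st] := perm_subseqs (simp_uniq (F_X f fF).1) us sf.
  by exists t => //; apply/flattenP; exists (subseqs f) => //; apply: map_f.
- move=> Y_refl; apply/nZpq/Y_refl/F_equiv => // f fF; right.
  by have [Xf _] := F_X f fF; split; [exact: simp_ne Xf | exact: simp_uniq Xf | exists f].
Qed.
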